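(* Let $X$ be a Banach space and $\{Y_i\}_{i\in I}$ a family of closed subspaces of $X$ satisfying the $(\ast)$-condition, with $Sz(Y_i)\le\omega^\alpha$ for all $i\in I$ and some ordinal $\alpha$. If $\overline{\bigcup_{i\in I}Y_i}=X$, then $Sz(X)\le\omega^{\alpha+1}$.
   Context: A family $\{Y_i\}_{i\in I}$ of closed subspaces of $X$ satisfies the $(\ast)$-condition if there is a family $\{P_i\}_{i\in I}$ of linear projections on $X^\ast$ with $\ker P_i=Y_i^\perp$, $\|P_i\|\le1$, such that for every $\varepsilon>0$ there is $\delta(\varepsilon)>0$ with $\|\varphi-P_i\varphi\|<\varepsilon$ for all $i$ whenever $\|\varphi\|=1$ and $\|\varphi+P_i\varphi\|>2-\delta(\varepsilon)$. Szlenk index: for weak*-compact $K\subset X^\ast$, $s_\varepsilon(K)=\{x^\ast\in K:\ \text{every weak*-neighborhood } V\text{ of }x^\ast\text{ has }\mathrm{diam}(V\cap K)>\varepsilon\}$, iterated transfinitely with intersections at limits; $Sz_\varepsilon(K)=\min\{\alpha:s^\alpha_\varepsilon(K)=\emptyset\}$ or $\infty$; $Sz(K)=\sup_\varepsilon Sz_\varepsilon(K)$; $Sz(X)=Sz(B_{X^\ast})$. *)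

From HB Require Import structures.
From mathcomp Require Import all_boot all_order all_algebra.
From mathcomp Require Import all_classical all_reals all_analysis.
Set Implicit Arguments. Unset Strict Implicit. Unset Printing Implicit Defensive.
Import Order.TTheory GRing.Theory Num.Theory.
Import numFieldNormedType.Exports.
Local Open Scope classical_set_scope.
Local Open Scope ring_scope.

Section Banach.
Variables (R : realType) (X : normedModType R).

Definition lin_subspace (S : set X) : Prop :=
  S 0 /\ forall (a : R) (x y : X), S x -> S y -> S (a *: x + y).

(* Dual of a subspace S, represented as functions X -> R that vanish off S,
   are linear on S and bounded on S.  For S = setT this is X^*. *)
Definition dual (S : set X) : set (X -> R) :=
  (fun f : X -> R => (forall x, ~ S x -> f x = 0) /\
           (forall (a : R) x y, S x -> S y -> f (a *: x + y) = a * f x + f y) /\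
           (exists C : R, forall x, S x -> `|f x| <= C * `|x|)).

Definition dnorm (S : set X) (f : X -> R) : R :=
  sup (fun r : R => exists x, S x /\ `|x| <= 1 /\ r = `|f x|).

Definition dball (S : set X) : set (X -> R) :=
  (fun f : X -> R => dual S f /\ dnorm S f <= 1).

Definition annih (Y : set X) : set (X -> R) :=
  (fun f : X -> R => dual setT f /\ forall y, Y y -> f y = 0).

(* weak^*-neighbourhoods of phi in S^* (topology generated by evaluations at
   points of S) *)
Definition wstar_nbhd (S : set X) (phi : X -> R) (V : set (X -> R)) : Prop :=
  exists (xs : seq X) (d : R), 0 < d /\ (forall x, x \in xs -> S x) /\
    (fun f : X -> R => dual S f /\ forall x, x \in xs -> `|f x - phi x| < d) `<=` V.

Definition ddiam (S : set X) (A : set (X -> R)) : R :=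
  sup (fun r : R => exists f g, A f /\ A g /\ r = dnorm S (fun x => f x - g x)).

Definition szlenk_deriv (S : set X) (eps : R) (K : set (X -> R)) :
  set (X -> R) :=
  (fun phi : X -> R => K phi /\
     forall V, wstar_nbhd S phi V -> ddiam S (V `&` K) > eps).

(* Transfinite iteration indexed by a well-ordered type (T, lt): the element
   t : T stands for the ordinal of its initial segment; D t = s^t(K). *)
Definition is_pred (T : Type) (lt : T -> T -> Prop) (u t : T) : Prop :=
  lt u t /\ forall v, ~ (lt u v /\ lt v t).

Definition szlenk_iteration (S : set X) (eps : R) (K : set (X -> R))
    (T : Type) (lt : T -> T -> Prop) (D : T -> set (X -> R)) : Prop :=
  forall t,
    ((forall u, ~ lt u t) -> D t = K) /\
    (forall u, is_pred lt u t -> D t = szlenk_deriv S eps (D u)) /\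
    ((exists u, lt u t) -> (forall u, ~ is_pred lt u t) ->
       D t = \bigcap_(u in (fun u => lt u t)) D u).

(* s^beta(K) where beta = order type of (T, lt), given the iteration D *)
Definition szlenk_top (S : set X) (eps : R) (K : set (X -> R))
    (T : Type) (lt : T -> T -> Prop) (D : T -> set (X -> R)) (F : set (X -> R))
    : Prop :=
  ((forall t : T, False) -> F = K) /\
  (forall m, (forall u, u <> m -> lt u m) -> F = szlenk_deriv S eps (D m)) /\
  ((exists t : T, True) -> (forall m, exists u, ~ lt u m /\ u <> m) ->
     F = \bigcap_(t in setT) D t).

(* Sz_eps(K) <= beta, i.e. s^gamma_eps(K) is empty for some gamma <= beta *)
Definition Sz_eps_le (S : set X) (eps : R) (K : set (X -> R))
    (T : Type) (lt : T -> T -> Prop) : Prop :=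
  forall D F, szlenk_iteration S eps K lt D -> szlenk_top S eps K lt D F ->
    (exists t, D t = set0) \/ F = set0.

(* Sz(S) = sup_eps Sz_eps(B_{S^*}) <= beta *)
Definition Sz_le (S : set X) (T : Type) (lt : T -> T -> Prop) : Prop :=
  forall eps : R, 0 < eps -> Sz_eps_le S eps (dball S) lt.

Definition star_condition (I : Type) (Y : I -> set X) : Prop :=
  exists P : I -> (X -> R) -> (X -> R),
    (forall i f, dual setT f -> dual setT (P i f)) /\
    (forall i (a : R) f g, dual setT f -> dual setT g ->
        P i (fun x => a * f x + g x) = (fun x => a * P i f x + P i g x)) /\
    (forall i f, dual setT f -> P i (P i f) = P i f) /\
    (forall i f, dual setT f -> (P i f = (fun=> 0) <-> annih (Y i) f)) /\
    (forall i f, dual setT f -> dnorm setT (P i f) <= dnorm setT f) /\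
    (forall eps : R, 0 < eps -> exists delta : R, 0 < delta /\
       forall i f, dual setT f -> dnorm setT f = 1 ->
         dnorm setT (fun x => f x + P i f x) > 2 - delta ->
         dnorm setT (fun x => f x - P i f x) < eps).

End Banach.

(* Ordinals as well-ordered types. *)
Definition is_wellorder (A : Type) (lt : A -> A -> Prop) : Prop :=
  well_founded lt /\ (forall x y z, lt x y -> lt y z -> lt x z) /\
  (forall x y, x = y \/ lt x y \/ lt y x).

(* omega^alpha: finitely supported functions alpha -> nat, compared at the
   largest point where they differ (Cantor normal form order). *)
Definition omega_pow (A : Type) : Type :=
  {f : A -> nat | finite_set (fun a => f a <> 0%N)}.

Definition omega_pow_lt (A : Type) (lt : A -> A -> Prop)
    (f g : omega_pow A) : Prop :=
  exists a, (proj1_sig f a < proj1_sig g a)%N /\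
    forall b, lt a b -> proj1_sig f b = proj1_sig g b.

(* alpha + 1 *)
Definition succ_lt (A : Type) (lt : A -> A -> Prop) (x y : option A) : Prop :=
  match x, y with
  | Some a, Some b => lt a b
  | Some _, None => True
  | None, _ => False
  end.

From HB Require Import structures.
From mathcomp Require Import all_boot all_order all_algebra.
From mathcomp Require Import all_classical all_reals all_analysis.
From mathcomp Require Import ring lra.
Import Order.TTheory GRing.Theory Num.Theory.
Import numFieldNormedType.Exports.

Set Implicit Arguments.
Unset Strict Implicit.
Unset Printing Implicit Defensive.

(* Fix eps, let delta come from the ( * )-condition for eps / 4, and set
   r = 1 - eta / 2 with eta = min (delta / 2) (1 / 2).  By induction on n,
   the Szlenk derivative of order omega^alpha * n of the dual ball lies in the
   ball of radius r^n.  If phi survives omega^alpha * (n + 1) derivations with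
   norm above r^(n+1), density gives x0 in the unit ball of some Y i with
   phi x0 > r^n (1 - eta).  On the weak*-open slice {psi | psi x0 > r^n (1 - eta)}
   the ( * )-condition makes psi close to P i psi, whose norm is at most that
   of psi restricted to Y i (Hahn-Banach); so psi |-> r^-n psi|Y i maps the
   derivatives of order omega^alpha * n + t into the eps/2-derivatives of
   order t of the dual ball of Y i, and r^-n phi|Y i survives omega^alpha
   derivations, contradicting Sz(Y i) <= omega^alpha.  Once r^N < eps / 2,
   one more derivation empties the set. *)

Local Open Scope classical_set_scope.

(** * Ordinals below omega^(alpha + 1) *)

Section WellOrder.
Variables (A : Type) (lt : A -> A -> Prop).
Hypothesis wo : is_wellorder lt.

Lemma wo_irrefl a : ~ lt a a.
Proof. by case: wo => wf _; elim: (wf a) => x _ IH H; exact: (IH x H H). Qed.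

Lemma wo_trans a b c : lt a b -> lt b c -> lt a c.
Proof. by case: wo => _ [tr _]; apply: tr. Qed.

Lemma wo_total a b : a = b \/ lt a b \/ lt b a.
Proof. by case: wo => _ [_ tot]; apply: tot. Qed.

Lemma wo_asym a b : lt a b -> ~ lt b a.
Proof. by move=> ab ba; apply: (@wo_irrefl a); apply: wo_trans ab ba. Qed.

Lemma wo_min_exists (P : set A) : P !=set0 ->
  exists2 m, P m & forall v, lt v m -> ~ P v.
Proof.
case: wo => wf _ [x Px]; elim: (wf x) Px => {}x _ IH Px.
have [[v vx Pv]|H] := pselect (exists2 v, lt v x & P v); first exact: IH vx Pv.
by exists x => // v vx Pv; apply: H; exists v.
Qed.

Lemma finite_set_has_max (S : set A) : finite_set S -> S !=set0 ->
  exists2 m, S m & forall b, S b -> b = m \/ lt b m.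
Proof.
move=> /(@finite_seqP {classic A}) [s ->]; elim: s => [[x]//|x s IH] _.
have inS b : [set` x :: s] b = (b = x \/ [set` s] b).
  rewrite /= inE; apply/propext.
  by split => [/orP[/eqP|]|[->|->]]; rewrite ?eqxx ?orbT; auto.
have [sn0|s0] := pselect ([set` s] !=set0); last first.
  exists x => [|b]; rewrite inS; first by left.
  by case=> [|bs]; [left|case: s0; exists b].
have [m ms Hm] := IH sn0.
have [xm|mx] : (x = m \/ lt x m) \/ lt m x.
  by case: (wo_total x m) => [|[]]; auto.
- by exists m => [|b]; rewrite inS; [right|case=> [->|/Hm]].
- exists x => [|b]; rewrite inS; first by left.
  case=> [|/Hm [->|bm]]; [left|right|right; exact: wo_trans bm mx] => //.
Qed.

End WellOrder.

Section OmegaPow.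
Variables (A : Type) (lt : A -> A -> Prop).
Hypothesis wo : is_wellorder lt.

Local Notation olt := (omega_pow_lt lt).

Definition supported_in (f : omega_pow A) (Z : set A) :=
  forall b, sval f b <> 0%N -> Z b.

Lemma omega_pow_ext (f g : omega_pow A) : sval f =1 sval g -> f = g.
Proof.
case: f g => [f fP] [g gP] /= /funext fg; subst g.
by congr exist; exact: Prop_irrelevance.
Qed.

Lemma omega_pow_lt_asym f g : olt f g -> ~ olt g f.
Proof.
move=> [a [fa Ha]] [b [gb Hb]].
have [ab|[ab|ba]] := wo_total wo a b.
- by subst b; move: (ltn_trans fa gb); rewrite ltnn.
- by move: gb; rewrite (Ha _ ab) ltnn.
- by move: fa; rewrite (Hb _ ba) ltnn.
Qed.

Lemma omega_pow_lt_irrefl f : ~ olt f f.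
Proof. by move=> H; apply: (omega_pow_lt_asym H H). Qed.

Lemma omega_pow_lt_trans f g h : olt f g -> olt g h -> olt f h.
Proof.
move=> [a [fa Ha]] [b [gb Hb]].
have [ab|[ab|ba]] := wo_total wo a b.
- subst b; exists a; split; first exact: ltn_trans fa gb.
  by move=> c ac; rewrite Ha // Hb.
- exists b; split; first by rewrite Ha.
  by move=> c bc; rewrite Ha ?Hb //; exact: (wo_trans wo ab bc).
- exists a; split; first by rewrite -(Hb _ ba).
  by move=> c ac; rewrite Ha ?Hb //; exact: (wo_trans wo ba ac).
Qed.

Lemma omega_pow_lt_total f g : f = g \/ olt f g \/ olt g f.
Proof.
have [//|nfg] := pselect (f = g); [by left|right].
pose D := fun a => sval f a <> sval g a.
have Dfin : finite_set D.
  apply: (@sub_finite_set _ _ ((fun a => sval f a <> 0%N) `|` (fun a => sval g a <> 0%N))).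
    move=> a Da; have [f0|f0] := pselect (sval f a = 0%N); last by left.
    by right => g0; apply: Da; rewrite f0 g0.
  by rewrite finite_setU; split; [exact: (svalP f)|exact: (svalP g)].
have Dn0 : D !=set0.
  apply: contrapT => H; apply: nfg; apply: omega_pow_ext => a.
  by apply: contrapT => Ha; apply: H; exists a.
have [m Dm Hm] := finite_set_has_max wo Dfin Dn0.
have eq_above b : lt m b -> sval f b = sval g b.
  move=> mb; apply: contrapT => /Hm [bm|]; first by subst b; exact: (wo_irrefl wo mb).
  exact: (wo_asym wo mb).
have [fgm|gfm] : (sval f m < sval g m \/ sval g m < sval f m)%N.
  by move: Dm; rewrite /D; case: ltngtP => // _ _; [left|right].
- by left; exists m; split => // b /eq_above.
- by right; exists m; split => // b /eq_above.
Qed.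

Lemma omega_pow0_subproof : finite_set (fun a : A => (fun=> 0%N) a <> 0%N).
Proof. by apply: (@sub_finite_set _ _ set0). Qed.

Definition omega_pow0 : omega_pow A := exist _ (fun=> 0%N) omega_pow0_subproof.

Lemma nlt_omega_pow0 f : ~ olt f omega_pow0.
Proof. by case=> a []. Qed.

Lemma omega_pow0_or_max f : f = omega_pow0 \/
  exists2 m, sval f m <> 0%N & supported_in f (fun b => b = m \/ lt b m).
Proof.
have [[b fb]|f0] := pselect ((fun b => sval f b <> 0%N) !=set0).
  by right; have [m fm Hm] := finite_set_has_max wo (svalP f) (ex_intro _ b fb); exists m.
left; apply: omega_pow_ext => a /=; apply: contrapT => fa.
by apply: f0; exists a.
Qed.

Lemma omega_pow_lt_supported (Z : set A) f g :
  (forall b b', ~ Z b -> lt b b' -> ~ Z b') ->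
  supported_in f Z -> olt g f -> supported_in g Z.
Proof.
move=> Zdown Zf [c [gc Hc]] b gb; apply: contrapT => Zb.
have fc : sval f c <> 0%N by move=> fc0; rewrite fc0 in gc.
have [cb|[cb|bc]] := wo_total wo c b.
- by subst c; apply: Zb; apply: Zf.
- by apply: gb; rewrite Hc //; apply: contrapT => /Zf.
- exact: (Zdown _ _ Zb bc (Zf _ fc)).
Qed.

Definition omega_pow_drop (f : omega_pow A) (m : A) : omega_pow A.
Proof.
refine (exist _ (fun b => if pselect (b = m) then 0%N else sval f b) _).
by apply: (sub_finite_set _ (svalP f)) => b /=; case: pselect.
Defined.

Lemma omega_pow_drop_eq f m : sval (omega_pow_drop f m) m = 0%N.
Proof. by rewrite /=; case: pselect. Qed.

Lemma omega_pow_drop_neq f m b : b <> m -> sval (omega_pow_drop f m) b = sval f b.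
Proof. by rewrite /=; case: pselect. Qed.

Lemma omega_pow_drop_supported f m Z :
  supported_in f (fun b => b = m \/ Z b) -> supported_in (omega_pow_drop f m) Z.
Proof.
move=> fZ b; have [->|bm] := pselect (b = m); first by rewrite omega_pow_drop_eq.
by rewrite omega_pow_drop_neq // => /fZ [].
Qed.

Section AccSupported.
Variable m : A.
Let below_m b := b = m \/ lt b m.

Let below_m_down b b' : ~ below_m b -> lt b b' -> ~ below_m b'.
Proof.
move=> Hb bb' [e|b'm]; first by subst b'; apply: Hb; right.
by apply: Hb; right; exact: (wo_trans wo bb' b'm).
Qed.

(* For a fixed coefficient [k] at [m]: induction on the accessibility of
   the part [h] of [f] below [m]. *)
Lemma acc_supported_le_top k :
  (forall f, supported_in f below_m -> (sval f m < k)%N -> Acc olt f) ->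
  forall h, Acc olt h -> supported_in h (lt^~ m) ->
  forall f, supported_in f below_m -> sval f m = k ->
  (forall b, b <> m -> sval f b = sval h b) -> Acc olt f.
Proof.
move=> IHk h; elim=> {}h _ IHh hm f fm fmk fh.
constructor => g gf; have gm := omega_pow_lt_supported below_m_down fm gf.
case: (gf) => c [gc Hc].
have fc : sval f c <> 0%N by move=> fc0; rewrite fc0 in gc.
have [cm|cm] := fm _ fc; first by subst c; apply: IHk; rewrite // -fmk.
have cnm : c <> m by move=> e; subst c; exact: (wo_irrefl wo cm).
apply: (IHh (omega_pow_drop g m)) => //.
- exists c; split; first by rewrite omega_pow_drop_neq // -fh.
  move=> d cd; have [->|dm] := pselect (d = m).
    rewrite omega_pow_drop_eq; apply/esym; apply: contrapT => /hm mm.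
    exact: (wo_irrefl wo mm).
  by rewrite omega_pow_drop_neq // -fh // Hc.
- exact: omega_pow_drop_supported.
- by rewrite Hc // fmk.
- by move=> b bm; rewrite omega_pow_drop_neq.
Qed.

Lemma acc_supported_le :
  (forall f, supported_in f (lt^~ m) -> Acc olt f) ->
  forall f, supported_in f below_m -> Acc olt f.
Proof.
move=> acc_lt f; move: {2}(sval f m) (erefl (sval f m)) => k.
elim/ltn_ind: k f => k IHk f fk fm.
have acc_drop : Acc olt (omega_pow_drop f m).
  exact: acc_lt (omega_pow_drop_supported fm).
apply: (acc_supported_le_top _ acc_drop _ fm fk).
- by move=> g gm gk; apply: (IHk (sval g m)).
- exact: omega_pow_drop_supported fm.
- by move=> b bm; rewrite omega_pow_drop_neq.
Qed.

End AccSupported.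

Lemma acc_supported_lt a f : supported_in f (lt^~ a) -> Acc olt f.
Proof.
case: wo => wf _; elim: (wf a) f => {}a _ IH f fa.
have [->|[m fm fle]] := omega_pow0_or_max f.
  by constructor => g /nlt_omega_pow0.
exact: (acc_supported_le (IH m (fa _ fm))).
Qed.

Lemma omega_pow_wellorder : is_wellorder olt.
Proof.
split; last by split; [exact: omega_pow_lt_trans|exact: omega_pow_lt_total].
move=> f; have [->|[m fm fle]] := omega_pow0_or_max f.
  by constructor => g /nlt_omega_pow0.
exact: (acc_supported_le (@acc_supported_lt m)).
Qed.

End OmegaPow.

Lemma succ_lt_wellorder (A : Type) (lt : A -> A -> Prop) :
  is_wellorder lt -> is_wellorder (succ_lt lt).
Proof.
case=> wf [tr tot]; split; last split.
- have accS a : Acc (succ_lt lt) (Some a).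
    elim: (wf a) => {}a _ IH; constructor=> -[b ba|[]]; exact: IH ba.
  by case=> [a|]; [exact: accS|constructor=> -[b _|[]]; exact: accS].
- by move=> [x|] [y|] [z|] //=; exact: tr.
- move=> [x|] [y|]; try by [right; left|right; right|left].
  by have [->|[xy|yx]] := tot x y; [left|right; left|right; right].
Qed.

Section OmegaPowSucc.
Variables (A : Type) (lt : A -> A -> Prop).
Hypothesis wo : is_wellorder lt.

Local Notation olt := (omega_pow_lt lt).
Local Notation olt' := (omega_pow_lt (succ_lt lt)).

Definition omega_mul_add_fun (n : nat) (t : omega_pow A) (o : option A) : nat :=
  if o is Some a then sval t a else n.

Lemma omega_mul_add_subproof n t :
  finite_set (fun o => omega_mul_add_fun n t o <> 0%N).
Proof.
apply: (@sub_finite_set _ _ ((Some @` (fun a => sval t a <> 0%N)) `|` [set None])).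
  by move=> [a|] /= H; [left; exists a|right].
rewrite finite_setU; split; last exact: finite_set1.
exact/finite_image/(svalP t).
Qed.

(* With the exponent alpha of omega^(alpha + 1) represented by [None],
   [omega_mul_add n t] is the ordinal omega^alpha * n + t. *)
Definition omega_mul_add n t : omega_pow (option A) :=
  exist _ (omega_mul_add_fun n t) (omega_mul_add_subproof n t).

Lemma omega_pow_low_subproof (v : omega_pow (option A)) :
  finite_set (fun a => sval v (Some a) <> 0%N).
Proof.
rewrite (_ : (fun a => _) = Some @^-1` (fun o => sval v o <> 0%N)) //.
by apply: finite_preimage (svalP v) => x y _ _ [].
Qed.

Definition omega_pow_low (v : omega_pow (option A)) : omega_pow A :=
  exist _ (fun a => sval v (Some a)) (omega_pow_low_subproof v).

Lemma omega_mul_add_low v : v = omega_mul_add (sval v None) (omega_pow_low v).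
Proof. by apply: omega_pow_ext => -[a|]. Qed.

Lemma omega_mul_add_lt2l n u t :
  olt' (omega_mul_add n u) (omega_mul_add n t) <-> olt u t.
Proof.
split=> [[[a|] [/= ut ab]]|[a [ut ab]]].
- by exists a; split => // b /(ab (Some b)).
- by rewrite ltnn in ut.
- by exists (Some a); split => // -[b|] //= /ab.
Qed.

Lemma omega_pow_succ_lt_top (v w : omega_pow (option A)) :
  (sval v None < sval w None)%N -> olt' v w.
Proof. by move=> vw; exists None; split => // -[b|]. Qed.

Lemma omega_pow_succ_top_le (v w : omega_pow (option A)) :
  olt' v w -> (sval v None <= sval w None)%N.
Proof. by move=> [[a|] [vw vwE]]; [rewrite (vwE None)|exact: ltnW]. Qed.

Lemma nlt_omega_mul_add00 v : ~ olt' v (omega_mul_add 0 (omega_pow0 A)).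
Proof. by move=> [[a|] []]. Qed.

Lemma omega_mul_add_lt_next n t :
  olt' (omega_mul_add n t) (omega_mul_add n.+1 (omega_pow0 A)).
Proof. exact: omega_pow_succ_lt_top. Qed.

Lemma is_pred_omega_mul_add n u t :
  is_pred olt u t -> is_pred olt' (omega_mul_add n u) (omega_mul_add n t).
Proof.
move=> [ut Hut]; split; first exact/omega_mul_add_lt2l.
move=> v [uv vt].
have vn : sval v None = n.
  by apply/eqP; rewrite eqn_leq (omega_pow_succ_top_le vt) (omega_pow_succ_top_le uv).
rewrite (omega_mul_add_low v) vn !omega_mul_add_lt2l in uv vt.
exact: Hut (conj uv vt).
Qed.

Lemma limit_omega_mul_add n t :
  (exists u, olt u t) -> (forall u, ~ is_pred olt u t) ->
  (exists v, olt' v (omega_mul_add n t)) /\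
  (forall v, ~ is_pred olt' v (omega_mul_add n t)).
Proof.
move=> [u ut] nopred; split; first by exists (omega_mul_add n u); apply/omega_mul_add_lt2l.
move=> p [pt Hpt]; move: (omega_pow_succ_top_le pt); rewrite /= leq_eqVlt.
case/orP => [/eqP pn|p_lt].
  rewrite (omega_mul_add_low p) pn in pt Hpt.
  apply: (nopred (omega_pow_low p)); split; first by rewrite -(omega_mul_add_lt2l n).
  by move=> w [pw wt]; apply: (Hpt (omega_mul_add n w)); rewrite !omega_mul_add_lt2l.
apply: (Hpt (omega_mul_add n u)); split; first exact: omega_pow_succ_lt_top.
exact/omega_mul_add_lt2l.
Qed.

Lemma is_pred_omega_mul_add_max n m : (forall u, u <> m -> olt u m) ->
  is_pred olt' (omega_mul_add n m) (omega_mul_add n.+1 (omega_pow0 A)).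
Proof.
move=> m_max; split; first exact: omega_mul_add_lt_next.
move=> v [mv vz]; have := omega_pow_succ_top_le mv; have := omega_pow_succ_top_le vz.
rewrite /= leq_eqVlt ltnS => /orP[/eqP vn _|vn nv].
  by rewrite (omega_mul_add_low v) vn omega_mul_add_lt2l in vz; apply: nlt_omega_pow0 vz.
have {}vn : sval v None = n by apply/eqP; rewrite eqn_leq vn nv.
rewrite (omega_mul_add_low v) vn omega_mul_add_lt2l in mv.
have [vm|/m_max vm] := pselect (omega_pow_low v = m).
  by rewrite vm in mv; exact: (omega_pow_lt_irrefl wo mv).
exact: (omega_pow_lt_asym wo mv vm).
Qed.

End OmegaPowSucc.

(** * Transfinite Szlenk iterations *)

Section SzlenkIteration.
Variables (R : realType) (X : normedModType R).
Variables (S : set X) (eps : R) (K : set (X -> R)).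
Variables (T : Type) (lt : T -> T -> Prop).
Hypothesis wo : is_wellorder lt.

Local Notation deriv := (szlenk_deriv S eps).

Lemma szlenk_deriv_sub A f : deriv A f -> A f.
Proof. by case. Qed.

Lemma is_pred_uniq u u' t : is_pred lt u t -> is_pred lt u' t -> u = u'.
Proof.
move=> [ut Hu] [u't Hu'].
by have [//|[uu'|u'u]] := wo_total wo u u'; [case: (Hu u')|case: (Hu' u)].
Qed.

Lemma szlenk_iteration_decr D : szlenk_iteration S eps K lt D ->
  forall t u, lt u t -> D t `<=` D u.
Proof.
move=> HD; case: (wo) => wf _ t; elim: (wf t) => {}t _ IH u ut.
have [[p pt]|nopred] := pselect (exists p, is_pred lt p t).
  have [_ [Hpred _]] := HD t; rewrite (Hpred _ pt) => f /szlenk_deriv_sub Dp.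
  have [->|[up|pu]] := wo_total wo u p => //; first exact: IH (proj1 pt) _ up _ Dp.
  by case: pt => _ /(_ u); case.
have [_ [_ Hlim]] := HD t; rewrite Hlim; first by move=> f /(_ u ut).
- by exists u.
- by move=> p pt; apply: nopred; exists p.
Qed.

Definition szlenk_unfold (G : T -> set (X -> R)) (t : T) : set (X -> R) :=
  fun chi => K chi /\ (forall u, is_pred lt u t -> deriv (G u) chi) /\
    ((exists u, lt u t) -> (forall u, ~ is_pred lt u t) -> forall u, lt u t -> G u chi).

(* The iteration is the greatest post-fixed point of [szlenk_unfold]: any
   family contained in its own unfolding lies below it, which replaces
   transfinite induction on the iteration. *)
Definition szlenk_gfp (t : T) : set (X -> R) :=
  fun chi => exists G, (forall s, G s `<=` szlenk_unfold G s) /\ G t chi.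

Hypothesis deriv_mono : forall A B, A `<=` B -> B `<=` K -> deriv A `<=` deriv B.

Lemma szlenk_unfold_mono G G' : (forall s, G s `<=` G' s) -> (forall s, G' s `<=` K) ->
  forall t, szlenk_unfold G t `<=` szlenk_unfold G' t.
Proof.
move=> GG' G'K t chi [Kchi [Hpred Hlim]]; split => //; split.
  by move=> u pu; apply: (deriv_mono (GG' u) (G'K u)); exact: Hpred.
by move=> ex nopred u ut; apply: GG'; exact: Hlim.
Qed.

Lemma szlenk_gfp_sub t chi : szlenk_gfp t chi -> K chi.
Proof. by move=> [G [HG /HG []]]. Qed.

Lemma szlenk_gfp_coind G : (forall s, G s `<=` szlenk_unfold G s) ->
  forall t, G t `<=` szlenk_gfp t.
Proof. by move=> HG t chi Gt; exists G. Qed.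

Lemma szlenk_gfp_fix t : szlenk_gfp t = szlenk_unfold szlenk_gfp t.
Proof.
have post s : szlenk_gfp s `<=` szlenk_unfold szlenk_gfp s.
  move=> chi [G [HG Gs]]; apply: (szlenk_unfold_mono _ (@szlenk_gfp_sub) (HG _ _ Gs)).
  by move=> s'; apply: szlenk_gfp_coind.
apply/seteqP; split; first exact: post.
apply: (szlenk_gfp_coind (G := szlenk_unfold szlenk_gfp)) => s.
by apply: szlenk_unfold_mono => // s' f [].
Qed.

Lemma szlenk_gfp_iteration : szlenk_iteration S eps K lt szlenk_gfp.
Proof.
move=> t; rewrite szlenk_gfp_fix; split; last split.
- move=> tmin; apply/seteqP; split=> [f []//|f Kf]; split => //.
  by split=> [u [ut _]|[u ut]]; case: (tmin u).
- move=> u pu; apply/seteqP; split=> [f [_ [Hpred _]]|f df]; first exact: Hpred.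
  split; first exact: szlenk_gfp_sub (szlenk_deriv_sub df).
  by split=> [u' pu'|_ /(_ u)//]; rewrite -(is_pred_uniq pu pu').
- move=> [u0 u0t] nopred; apply/seteqP; split=> [f [_ [_ Hlim]] u ut|f Hf].
    by apply: Hlim => //; exists u0.
  split; first exact: (@szlenk_gfp_sub u0 _ (Hf _ u0t)).
  by split=> [u /nopred|_ _ u ut]; last exact: Hf.
Qed.

Definition szlenk_last (D : T -> set (X -> R)) : set (X -> R) :=
  fun chi => (forall m, (forall u, u <> m -> lt u m) -> deriv (D m) chi) /\
    ((forall m, ~ (forall u, u <> m -> lt u m)) -> forall t, D t chi).

Lemma szlenk_top_last (t0 : T) D : szlenk_top S eps K lt D (szlenk_last D).
Proof.
split; last split.
- by move=> /(_ t0).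
- move=> m m_max; apply/seteqP; split=> [f [Hmax _]|f df]; first exact: Hmax.
  split=> [m' m'_max|/(_ m)//].
  have [->//|nm] := pselect (m' = m).
  by case: (wo_asym wo (m_max _ nm) (m'_max _ (nesym nm))).
- move=> _ nomax; apply/seteqP; split=> [f [_ Hlim] t _|f Hf].
    by apply: Hlim => m m_max; have [u [nu ne]] := nomax m; exact/nu/m_max.
  split=> [m m_max|_ t]; last exact: Hf.
  by have [u [nu ne]] := nomax m; case: nu; exact: m_max.
Qed.

End SzlenkIteration.

Local Open Scope ring_scope.

(** * Linear subspaces and dual norms *)

Section DualNorm.
Variables (R : realType) (X : normedModType R).
Implicit Types (S Z : set X) (f g h : X -> R) (x y : X) (a M : R).

Definition linear_on Z h :=
  forall a x y, Z x -> Z y -> h (a *: x + y) = a * h x + h y.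

Lemma lin_subspaceT : lin_subspace [set: X].
Proof. by []. Qed.

Lemma lin_subspaceZ S a x : lin_subspace S -> S x -> S (a *: x).
Proof. by move=> [S0 SS] Sx; have := SS a x 0 Sx S0; rewrite addr0. Qed.

Lemma lin_subspaceD S x y : lin_subspace S -> S x -> S y -> S (x + y).
Proof. by move=> [_ SS] Sx Sy; have := SS 1 x y Sx Sy; rewrite scale1r. Qed.

Lemma lin_subspaceN S x : lin_subspace S -> S x -> S (- x).
Proof. by move=> SS /(lin_subspaceZ (-1) SS); rewrite scaleN1r. Qed.

Lemma linear_on0 Z h : Z 0 -> linear_on Z h -> h 0 = 0.
Proof.
move=> Z0 hZ; have := hZ 1 0 0 Z0 Z0; rewrite scaler0 addr0 mul1r => h0.
by apply: (@addrI _ (h 0)); rewrite -h0 addr0.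
Qed.

Lemma linear_onZ Z h a x : lin_subspace Z -> linear_on Z h -> Z x -> h (a *: x) = a * h x.
Proof.
move=> [Z0 ZZ] hZ Zx; have := hZ a x 0 Zx Z0.
by rewrite addr0 (linear_on0 Z0 hZ) addr0.
Qed.

Lemma linear_onD Z h x y : linear_on Z h -> Z x -> Z y -> h (x + y) = h x + h y.
Proof. by move=> hZ Zx Zy; have := hZ 1 x y Zx Zy; rewrite scale1r mul1r. Qed.

Lemma linear_onN Z h x : lin_subspace Z -> linear_on Z h -> Z x -> h (- x) = - h x.
Proof. by move=> ZZ hZ Zx; rewrite -scaleN1r (linear_onZ _ ZZ hZ Zx) mulN1r. Qed.

Lemma linear_onB Z h x y : lin_subspace Z -> linear_on Z h -> Z x -> Z y ->
  h (x - y) = h x - h y.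
Proof.
move=> ZZ hZ Zx Zy.
by rewrite (linear_onD hZ Zx (lin_subspaceN ZZ Zy)) (linear_onN ZZ hZ Zy).
Qed.

Lemma dual_linear S f : dual S f -> linear_on S f.
Proof. by case=> _ []. Qed.

Lemma dual0 S : dual S (fun=> 0).
Proof.
split=> //; split; first by move=> a x y _ _; rewrite mulr0 addr0.
by exists 0 => x _; rewrite normr0 mul0r.
Qed.

Lemma dual_lc S f g a : lin_subspace S -> dual S f -> dual S g ->
  dual S (fun x => a * f x + g x).
Proof.
move=> SS [f0 [fS [Cf fC]]] [g0 [gS [Cg gC]]]; split; last split.
- by move=> x nSx; rewrite f0 // g0 // mulr0 addr0.
- by move=> b x y Sx Sy; rewrite fS // gS //; ring.
- exists (`|a| * `|Cf| + `|Cg|) => x Sx.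
  rewrite mulrDl; apply: (le_trans (ler_normD _ _)); apply: lerD.
    rewrite normrM -mulrA; apply: ler_wpM2l => //.
    by apply: (le_trans (fC _ Sx)); apply: ler_wpM2r => //; exact: ler_norm.
  by apply: (le_trans (gC _ Sx)); apply: ler_wpM2r => //; exact: ler_norm.
Qed.

Lemma dual_scale S f a : lin_subspace S -> dual S f -> dual S (fun x => a * f x).
Proof.
move=> SS df; have := dual_lc a SS df (dual0 S).
by congr dual; apply: funext => x; rewrite addr0.
Qed.

Lemma dual_add S f g : lin_subspace S -> dual S f -> dual S g -> dual S (f \+ g).
Proof.
move=> SS df dg; have := dual_lc 1 SS df dg.
by congr dual; apply: funext => x; rewrite mul1r.
Qed.

Lemma dual_sub S f g : lin_subspace S -> dual S f -> dual S g -> dual S (f \- g).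
Proof.
move=> SS df dg; have := dual_lc (-1) SS dg df.
by congr dual; apply: funext => x; rewrite mulN1r addrC.
Qed.

Lemma has_sup_dnorm S f : S 0 -> dual S f ->
  has_sup [set r | exists x, S x /\ `|x| <= 1 /\ r = `|f x|].
Proof.
move=> S0 [_ [_ [C fC]]]; split; first by exists `|f 0|, 0; rewrite normr0.
exists `|C| => r [x [Sx [x1 ->]]]; apply: (le_trans (fC x Sx)).
apply: (le_trans (ler_norm _)); rewrite normrM (normr_id x) -[leRHS]mulr1.
exact: ler_wpM2l.
Qed.

Lemma ler_dnorm S f x : S 0 -> dual S f -> S x -> `|x| <= 1 -> `|f x| <= dnorm S f.
Proof.
move=> S0 df Sx x1; apply: ub_le_sup; last by exists x.
by case: (has_sup_dnorm S0 df).
Qed.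

Lemma ler_dnormT f x : dual setT f -> `|x| <= 1 -> `|f x| <= dnorm setT f.
Proof. by move=> df; apply: ler_dnorm. Qed.

Lemma dnorm_le S f M : S 0 -> (forall x, S x -> `|x| <= 1 -> `|f x| <= M) ->
  dnorm S f <= M.
Proof.
move=> S0 fM; apply: ge_sup; first by exists `|f 0|, 0; rewrite normr0.
by move=> r [x [Sx [x1 ->]]]; apply: fM.
Qed.

Lemma dnorm_ge0 S f : S 0 -> dual S f -> 0 <= dnorm S f.
Proof. by move=> S0 df; apply: le_trans (ler_dnorm S0 df S0 _) => //; rewrite normr0. Qed.

Lemma dnorm_gt S f r : S 0 -> r < dnorm S f ->
  exists x, S x /\ `|x| <= 1 /\ r < `|f x|.
Proof.
move=> S0 /sup_gt[|_ [x [Sx [x1 ->]]] rx]; last by exists x.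
by exists `|f 0|, 0; rewrite normr0.
Qed.

Lemma dnorm_gt_pos S f r : lin_subspace S -> dual S f -> r < dnorm S f ->
  exists x, [/\ S x, `|x| <= 1 & r < f x].
Proof.
move=> SS df /(dnorm_gt (proj1 SS)) [x [Sx [x1 rx]]].
have [fx0|fx0] := lerP 0 (f x); first by exists x; rewrite -(ger0_norm fx0).
exists (- x); split; [exact: lin_subspaceN|by rewrite normrN|].
by rewrite (linear_onN SS (dual_linear df) Sx) -(ltr0_norm fx0).
Qed.

Lemma ler_dnormM S f x : lin_subspace S -> dual S f -> S x ->
  `|f x| <= dnorm S f * `|x|.
Proof.
move=> SS df Sx; have [S0 _] := SS.
have [->|xn0] := eqVneq x 0.
  by rewrite (linear_on0 S0 (dual_linear df)) !normr0 mulr0.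
have nx : 0 < `|x| by rewrite normr_gt0.
have := ler_dnorm S0 df (lin_subspaceZ `|x|^-1 SS Sx).
rewrite normrZ normrV ?unitfE ?gt_eqF // normr_id mulVf ?gt_eqF // => /(_ (lexx _)).
rewrite (linear_onZ _ SS (dual_linear df) Sx) normrM normrV ?unitfE ?gt_eqF // normr_id.
by rewrite ler_pdivrMl // mulrC.
Qed.

Lemma dnorm_scale S f a : lin_subspace S -> dual S f ->
  dnorm S (fun x => a * f x) = `|a| * dnorm S f.
Proof.
move=> SS df; have [S0 _] := SS.
have scale_le b h : dual S h -> dnorm S (fun x => b * h x) <= `|b| * dnorm S h.
  move=> dh; apply: dnorm_le => // x Sx x1; rewrite normrM.
  exact/ler_wpM2l/ler_dnorm.
apply/eqP; rewrite eq_le scale_le //=.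
have [->|an0] := eqVneq a 0.
  by rewrite normr0 mul0r; apply/dnorm_ge0/dual_scale.
have na : 0 < `|a| by rewrite normr_gt0.
have fa : dnorm S f <= `|a^-1| * dnorm S (fun x => a * f x).
  rewrite {1}(_ : f = fun x => a^-1 * (a * f x)); last by apply: funext => x; rewrite mulKf.
  exact/scale_le/dual_scale.
by rewrite normrV ?unitfE // -(ler_pM2l na) mulrA mulfV ?gt_eqF // mul1r in fa.
Qed.

Lemma dnorm_sub_le S f g : S 0 -> dual S f -> dual S g ->
  dnorm S (f \- g) <= dnorm S f + dnorm S g.
Proof.
move=> S0 df dg; apply: dnorm_le => // x Sx x1.
by apply: le_trans (ler_normB _ _) _; apply: lerD; exact: ler_dnorm.
Qed.

Definition dbounded S M (K : set (X -> R)) := forall f, K f -> dual S f /\ dnorm S f <= M.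

Lemma dbounded_dball S : dbounded S 1 (dball S).
Proof. by move=> f []. Qed.

Lemma ddiam_gt S M (A : set (X -> R)) e : S 0 -> dbounded S M A -> 0 <= e ->
  e < ddiam S A <-> exists f g, A f /\ A g /\ e < dnorm S (f \- g).
Proof.
move=> S0 AM e0; split; last first.
  move=> [f [g [Af [Ag fg]]]]; apply: lt_le_trans fg _.
  apply: ub_le_sup; last by exists f, g.
  exists (M + M) => r [f' [g' [Af' [Ag' ->]]]].
  have [df Mf] := AM _ Af'; have [dg Mg] := AM _ Ag'.
  by apply: le_trans (dnorm_sub_le S0 df dg) _; exact: lerD.
have [[r [f [g [Af [Ag rE]]]]]|A0] :=
  pselect ([set r | exists f g, A f /\ A g /\ r = dnorm S (f \- g)] !=set0).
  move=> /sup_gt[|_ [f' [g' [Af' [Ag' ->]]]] ef]; last by exists f', g'.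
  by exists r, f, g.
rewrite /ddiam (_ : (fun r : R => _) = set0) ?sup0 ?ltNge ?e0 //.
by apply/seteqP; split => // r Ar; apply: A0; exists r.
Qed.

Lemma szlenk_deriv_mono S eps M (K A B : set (X -> R)) : S 0 -> 0 <= eps ->
  dbounded S M K -> A `<=` B -> B `<=` K ->
  szlenk_deriv S eps A `<=` szlenk_deriv S eps B.
Proof.
move=> S0 e0 KM AB BK f [Af fA]; split; first exact: AB.
move=> V HV; have := fA V HV.
have VAM : dbounded S M (V `&` A) by move=> g [_ /AB /BK /KM].
have VBM : dbounded S M (V `&` B) by move=> g [_ /BK /KM].
rewrite (ddiam_gt S0 VAM e0) (ddiam_gt S0 VBM e0).
by move=> [g [h [[Vg /AB Bg] [[Vh /AB Bh] gh]]]]; exists g, h.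
Qed.

Lemma szlenk_gfp_dball_iteration S eps (T : Type) (lt : T -> T -> Prop) :
  S 0 -> 0 <= eps -> is_wellorder lt ->
  szlenk_iteration S eps (dball S) lt (szlenk_gfp S eps (dball S) lt).
Proof.
move=> S0 e0 wo; apply: (szlenk_gfp_iteration wo) => K1 K2.
by apply: szlenk_deriv_mono S0 e0 (@dbounded_dball S).
Qed.

Definition restr (Y : set X) f : X -> R := fun x => if `[< Y x >] then f x else 0.

Lemma restrE (Y : set X) f x : Y x -> restr Y f x = f x.
Proof. by move=> Yx; rewrite /restr asboolT. Qed.

Lemma restr_sub (Y : set X) f g : restr Y (f \- g) = restr Y f \- restr Y g.
Proof. by apply: funext => x; rewrite /restr /=; case: asboolP => _; rewrite ?subr0. Qed.

Lemma dual_restr (Y : set X) f : lin_subspace Y -> dual setT f -> dual Y (restr Y f).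
Proof.
move=> [Y0 YY] [_ [fT [C fC]]]; split; last split.
- by move=> x nYx; rewrite /restr asboolF.
- move=> a x y Yx Yy; rewrite !restrE //; last exact: YY.
  exact: fT.
- by exists C => x Yx; rewrite restrE //; apply: fC.
Qed.

Lemma dnorm_restr (Y : set X) f : Y 0 -> dual setT f ->
  dnorm Y (restr Y f) <= dnorm setT f.
Proof.
move=> Y0 df; apply: dnorm_le => // x Yx x1; rewrite restrE //.
exact: ler_dnorm.
Qed.

End DualNorm.

Arguments lin_subspaceT {R X}.

(** * Hahn-Banach *)

Section HahnBanach.
Variables (R : realType) (X : normedModType R).
Variables (Y : set X) (g : X -> R) (M : R).
Hypothesis Ysub : lin_subspace Y.
Hypothesis M0 : 0 <= M.
Hypothesis g_lin : linear_on Y g.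
Hypothesis g_bound : forall y, Y y -> `|g y| <= M * `|y|.

Definition bounded_extension (p : set X * (X -> R)) :=
  [/\ lin_subspace p.1, Y `<=` p.1, linear_on p.1 p.2,
      (forall y, Y y -> p.2 y = g y) & (forall z, p.1 z -> `|p.2 z| <= M * `|z|)].

Definition bext := {p : set X * (X -> R) | bounded_extension p}.

Definition bext_le (s t : bext) : bool :=
  `[< (sval s).1 `<=` (sval t).1 /\
      forall z, (sval s).1 z -> (sval s).2 z = (sval t).2 z >].

Lemma bounded_extension_base : bounded_extension (Y, g).
Proof. by split. Qed.

Section Chain.
Variable C : set bext.
Hypothesis C_total : total_on C bext_le.
Hypothesis C_n0 : C !=set0.

Definition chain_dom : set X := fun x => exists2 s, C s & (sval s).1 x.

Definition chain_fun (x : X) : R :=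
  match pselect (exists2 s, C s & (sval s).1 x) with
  | left H => (sval (projT1 (cid2 H))).2 x
  | right _ => 0
  end.

Lemma chain_funE s x : C s -> (sval s).1 x -> chain_fun x = (sval s).2 x.
Proof.
move=> Cs sx; rewrite /chain_fun; case: pselect => [H|]; last by case; exists s.
case: (cid2 H) => s0 /= Cs0 s0x.
by have [/asboolP [_ ->]|/asboolP [_ <-]] := C_total Cs Cs0.
Qed.

Lemma chain_dom2 s s' x y : C s -> C s' -> (sval s).1 x -> (sval s').1 y ->
  exists s'', [/\ C s'', (sval s'').1 x & (sval s'').1 y].
Proof.
move=> Cs Cs' sx s'y; have [/asboolP [ss' _]|/asboolP [s's _]] := C_total Cs Cs'.
  by exists s'; split => //; apply: ss'.
by exists s; split => //; apply: s's.
Qed.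

Lemma chain_bounded_extension : bounded_extension (chain_dom, chain_fun).
Proof.
case: C_n0 => s0 Cs0; case: (svalP s0) => [[Z0 _] YZ _ gZ _].
split.
- split; first by exists s0.
  move=> a x y [s Cs sx] [s' Cs' s'y].
  have [s'' [Cs'' x'' y'']] := chain_dom2 Cs Cs' sx s'y.
  by exists s'' => //; case: (svalP s'') => [[_]] + _ _ _ _; apply.
- by move=> y Yy; exists s0 => //; apply: YZ.
- move=> a x y [s Cs sx] [s' Cs' s'y].
  have [s'' [Cs'' x'' y'']] := chain_dom2 Cs Cs' sx s'y.
  case: (svalP s'') => [[_ lin] _ hlin _ _].
  by rewrite /= !(chain_funE Cs'') //; [apply: hlin|apply: lin].
- by move=> y Yy /=; rewrite (chain_funE Cs0) ?gZ //; apply: YZ.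
- move=> z [s Cs sz] /=; rewrite (chain_funE Cs sz).
  by case: (svalP s) => _ _ _ _; apply.
Qed.

End Chain.

Lemma bext_chain_ub (C : set bext) : total_on C bext_le ->
  exists t, forall s, C s -> bext_le s t.
Proof.
move=> C_total; have [C_n0|C0] := pselect (C !=set0); last first.
  by exists (exist _ _ bounded_extension_base) => s Cs; case: C0; exists s.
exists (exist _ _ (chain_bounded_extension C_total C_n0)) => s Cs.
apply/asboolP; split => /= [z sz|z sz]; first by exists s.
by rewrite (chain_funE C_total Cs sz).
Qed.

Section OneDimExtension.
Variables (Z : set X) (h : X -> R) (z : X).
Hypothesis hZ : bounded_extension (Z, h).
Hypothesis Znz : ~ Z z.

Let Zsub : lin_subspace Z. Proof. by case: hZ. Qed.
Let h_lin : linear_on Z h. Proof. by case: hZ. Qed.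
Let h_bound w : Z w -> `|h w| <= M * `|w|. Proof. by case: hZ => _ _ _ _; apply. Qed.
Let Z0 : Z 0. Proof. by case: Zsub. Qed.

Lemma ext_sum_bound w w' : Z w -> Z w' ->
  h w + h w' <= M * `|w - z| + M * `|w' + z|.
Proof.
move=> Zw Zw'; rewrite -(linear_onD h_lin Zw Zw') -mulrDr.
apply: le_trans (ler_norm _) _; apply: le_trans (h_bound (lin_subspaceD Zsub Zw Zw')) _.
apply: ler_wpM2l => //.
by rewrite (_ : w + w' = (w - z) + (w' + z)) ?ler_normD // addrACA addNr addr0.
Qed.

(* Any value between sup_w (h w - M |w - z|) and inf_w (M |w + z| - h w)
   keeps the bound M; [ext_value] is the supremum. *)
Definition ext_value := sup [set h w - M * `|w - z| | w in Z].

Lemma ext_value_ge w : Z w -> h w - M * `|w - z| <= ext_value.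
Proof.
move=> Zw; apply: ub_le_sup; last by exists w.
exists (M * `|0 + z| - h 0) => _ [w' Zw' <-]; have := ext_sum_bound Zw' Z0; lra.
Qed.

Lemma ext_value_le w' : Z w' -> ext_value <= M * `|w' + z| - h w'.
Proof.
move=> Zw'; apply: ge_sup; first by exists (h 0 - M * `|0 - z|), 0.
by move=> _ [w Zw <-]; have := ext_sum_bound Zw Zw'; lra.
Qed.

Lemma ext_value_geZ w l : Z w -> 0 < l -> h w - M * `|w - l *: z| <= l * ext_value.
Proof.
move=> Zw l0; have := ext_value_ge (lin_subspaceZ l^-1 Zsub Zw).
rewrite (linear_onZ _ Zsub h_lin Zw).
have -> : l^-1 *: w - z = l^-1 *: (w - l *: z).
  by rewrite scalerBr scalerA mulVf ?gt_eqF // scale1r.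
rewrite normrZ gtr0_norm ?invr_gt0 // => H.
have -> : h w - M * `|w - l *: z| = l * (l^-1 * h w - M * (l^-1 * `|w - l *: z|)).
  by field; rewrite gt_eqF.
by rewrite ler_wpM2l // ltW.
Qed.

Lemma ext_value_leZ w l : Z w -> 0 < l -> l * ext_value <= M * `|w + l *: z| - h w.
Proof.
move=> Zw l0; have := ext_value_le (lin_subspaceZ l^-1 Zsub Zw).
rewrite (linear_onZ _ Zsub h_lin Zw).
have -> : l^-1 *: w + z = l^-1 *: (w + l *: z).
  by rewrite scalerDr scalerA mulVf ?gt_eqF // scale1r.
rewrite normrZ gtr0_norm ?invr_gt0 // => H.
have -> : M * `|w + l *: z| - h w = l * (M * (l^-1 * `|w + l *: z|) - l^-1 * h w).
  by field; rewrite gt_eqF.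
by rewrite ler_wpM2l // ltW.
Qed.

Definition span_add : set X := fun x => exists w t, Z w /\ x = w + t *: z.

Lemma span_add_uniq w t w' t' : Z w -> Z w' -> w + t *: z = w' + t' *: z ->
  w = w' /\ t = t'.
Proof.
move=> Zw Zw' E; have [tt'|tt'] := eqVneq t t'.
  by subst t'; split => //; move/addIr: E.
exfalso; apply: Znz.
have -> : z = (t - t')^-1 *: (w' - w).
  apply: (@scalerI _ _ (t - t')); first by rewrite subr_eq0.
  rewrite scalerA mulfV ?subr_eq0 // scale1r scalerBl.
  by apply: (@addIr _ (w + t' *: z)); rewrite addrCA subrK addrA subrK.
exact/(lin_subspaceZ _ Zsub)/(lin_subspaceD Zsub Zw')/(lin_subspaceN Zsub).
Qed.

Definition ext_fun (x : X) : R :=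
  match pselect (exists p : X * R, Z p.1 /\ x = p.1 + p.2 *: z) with
  | left H => let p := sval (cid H) in h p.1 + p.2 * ext_value
  | right _ => 0
  end.

Lemma ext_funE w t : Z w -> ext_fun (w + t *: z) = h w + t * ext_value.
Proof.
move=> Zw; rewrite /ext_fun; case: pselect => [H|]; last by case; exists (w, t).
case: (cid H) => [[w' t']] /= [Zw' E].
by have [-> ->] := span_add_uniq Zw Zw' E.
Qed.

Lemma span_add_base w : Z w -> span_add w.
Proof. by exists w, 0; rewrite scale0r addr0. Qed.

Lemma ext_fun_base w : Z w -> ext_fun w = h w.
Proof. by move=> Zw; have := ext_funE 0 Zw; rewrite scale0r addr0 mul0r addr0. Qed.

Lemma ext_fun_bound w t : Z w -> `|ext_fun (w + t *: z)| <= M * `|w + t *: z|.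
Proof.
move=> Zw; rewrite ext_funE //.
have [->|tn0] := eqVneq t 0; first by rewrite scale0r addr0 mul0r addr0; apply: h_bound.
have Zmw := lin_subspaceN Zsub Zw; have hmw := linear_onN Zsub h_lin Zw.
rewrite ler_norml; case: (ltgtP t 0) => [tlt|tgt|/eqP]; last by rewrite (negPf tn0).
- have l0 : 0 < - t by rewrite oppr_gt0.
  have := ext_value_geZ Zw l0; rewrite scaleNr opprK => H1.
  have := ext_value_leZ Zmw l0; rewrite scaleNr -opprD normrN hmw => H2.
  apply/andP; split; lra.
- have := ext_value_leZ Zw tgt => H1.
  have := ext_value_geZ Zmw tgt; rewrite -opprD normrN hmw => H2.
  apply/andP; split; lra.
Qed.

Lemma ext_bounded_extension : bounded_extension (span_add, ext_fun).
Proof.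
have span_lc a w t w' t' :
    a *: (w + t *: z) + (w' + t' *: z) = (a *: w + w') + (a * t + t') *: z.
  by rewrite scalerDr scalerA scalerDl addrACA.
case: hZ => _ /= YZ _ hY _; split => /=.
- split; first exact: span_add_base Z0.
  move=> a _ _ [w [t [Zw ->]]] [w' [t' [Zw' ->]]]; rewrite span_lc.
  by exists (a *: w + w'), (a * t + t'); split => //; case: Zsub => _; apply.
- by move=> y /YZ /span_add_base.
- move=> a _ _ [w [t [Zw ->]]] [w' [t' [Zw' ->]]]; rewrite span_lc.
  rewrite !ext_funE //; last by case: Zsub => _; apply.
  by rewrite h_lin //; ring.
- by move=> y Yy; rewrite ext_fun_base ?hY //; exact: YZ.
- by move=> _ [w [t [Zw ->]]]; apply: ext_fun_bound.
Qed.

End OneDimExtension.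

Theorem hahn_banach : exists w : X -> R, [/\ linear_on setT w,
  (forall y, Y y -> w y = g y) & (forall x, `|w x| <= M * `|x|)].
Proof.
have [t t_max] : exists t : bext, premaximal bext_le t.
  apply: (@ZL_preorder bext (exist _ _ bounded_extension_base) bext_le).
  - by move=> s; apply/asboolP; split.
  - move=> r s u /asboolP [rs rsE] /asboolP [su suE]; apply/asboolP; split.
      by move=> x /rs /su.
    by move=> x rx; rewrite rsE // suE //; apply: rs.
  - exact: bext_chain_ub.
case: t t_max => [[Z h] hZ] t_max.
case: (hZ) => [[Z0 _] _ h_lin hY h_bound].
suff ZT x : Z x.
  by exists h; split=> // [a x y _ _|x]; [apply: h_lin|apply: h_bound].
apply: contrapT => Znx.
have /t_max/asboolP[/= span_Z _] :
    bext_le (exist _ _ hZ) (exist _ _ (ext_bounded_extension hZ Znx)).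
  apply/asboolP; split => /= [w|w Zw]; first exact: span_add_base.
  by rewrite ext_fun_base.
by apply/Znx/span_Z; exists 0, 1; rewrite scale1r add0r.
Qed.

End HahnBanach.

(** * The Szlenk index estimate *)

Lemma exists_expr_lt (R : realType) (r e : R) : 0 <= r -> r < 1 -> 0 < e ->
  exists n : nat, r ^+ n < e.
Proof.
move=> r0 r1 e0.
have := @cvgr0_norm_lt _ _ _ _ eventually_filter _ (cvg_expr (z:=r) _) e e0.
rewrite ger0_norm // => /(_ r1) [N _ HN].
by exists N; have := HN N (leqnn N) => /=; rewrite ger0_norm // exprn_ge0.
Qed.

Section StarProjection.
Variables (R : realType) (X : normedModType R) (I : Type) (Y : I -> set X).
Hypothesis Ysub : forall i, lin_subspace (Y i).
Variable P : I -> (X -> R) -> (X -> R).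
Hypothesis P_dual : forall i f, dual setT f -> dual setT (P i f).
Hypothesis P_lin : forall i (a : R) f g, dual setT f -> dual setT g ->
  P i (fun x => a * f x + g x) = (fun x => a * P i f x + P i g x).
Hypothesis P_idem : forall i f, dual setT f -> P i (P i f) = P i f.
Hypothesis P_ker : forall i f, dual setT f -> (P i f = (fun=> 0) <-> annih (Y i) f).
Hypothesis P_norm : forall i f, dual setT f -> dnorm setT (P i f) <= dnorm setT f.

Lemma proj0 i : P i (fun=> 0) = (fun=> 0).
Proof. by apply/(P_ker i (dual0 _)); split; first exact: dual0. Qed.

Lemma proj_sub i f g : dual setT f -> dual setT g -> P i (f \- g) = P i f \- P i g.
Proof.
move=> df dg; have := P_lin i (-1) dg df.
rewrite (_ : (fun x => -1 * g x + f x) = f \- g); last first.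
  by apply: funext => x; rewrite mulN1r addrC.
by move=> ->; apply: funext => x; rewrite mulN1r addrC.
Qed.

Lemma proj_scale i a f : dual setT f -> P i (fun x => a * f x) = (fun x => a * P i f x).
Proof.
move=> df; have := P_lin i a df (dual0 _); rewrite proj0.
have -> : (fun x => a * f x + 0) = (fun x => a * f x) by apply: funext => x; rewrite addr0.
by move=> ->; apply: funext => x; rewrite addr0.
Qed.

Lemma proj_eq_on i f g : dual setT f -> dual setT g ->
  (forall y, Y i y -> f y = g y) -> P i f = P i g.
Proof.
move=> df dg fg; have dfg := dual_sub lin_subspaceT df dg.
have /(P_ker i dfg) : annih (Y i) (f \- g) by split=> // y /fg /= ->; rewrite subrr.
rewrite proj_sub // => fg0; apply: funext => x.
by apply/eqP; rewrite -subr_eq0; have /= -> := congr1 (@^~ x) fg0.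
Qed.

Lemma proj_id_on i f y : dual setT f -> Y i y -> P i f y = f y.
Proof.
move=> df Yy; have dPf := P_dual i df.
have dfPf := dual_sub lin_subspaceT df dPf.
have /(P_ker i dfPf) [_ /(_ y Yy) /eqP] : P i (f \- P i f) = fun=> 0.
  by rewrite proj_sub // P_idem //; apply: funext => x /=; rewrite subrr.
by rewrite subr_eq0 => /eqP.
Qed.

(* [P i f] only depends on the restriction of [f] to [Y i], which extends by
   Hahn-Banach to a functional with the same norm. *)
Lemma dnorm_proj_restr i f : dual setT f ->
  dnorm setT (P i f) <= dnorm (Y i) (restr (Y i) f).
Proof.
move=> df; have [Y0 _] := Ysub i.
set M := dnorm (Y i) (restr (Y i) f).
have drf := dual_restr (Ysub i) df.
have M0 : 0 <= M by apply: dnorm_ge0.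
have f_bound y : Y i y -> `|f y| <= M * `|y|.
  by move=> Yy; rewrite -(restrE f Yy); apply: ler_dnormM.
have f_lin : linear_on (Y i) f by move=> a x y _ _; apply: (dual_linear df).
have [w [w_lin wf w_bound]] := hahn_banach (Ysub i) M0 f_lin f_bound.
have dw : dual setT w.
  by split=> [x /(_ Logic.I)//|]; split=> //; exists M => x _; apply: w_bound.
rewrite (proj_eq_on df dw) => [|y /wf //]; apply: le_trans (P_norm i dw) _.
apply: dnorm_le => // x _ x1; apply: le_trans (w_bound x) _.
by rewrite -[leRHS]mulr1 ler_wpM2l.
Qed.

Lemma dnorm_sub_proj_le i f g : dual setT f -> dual setT g ->
  dnorm setT (f \- g) <= dnorm setT (f \- P i f) + dnorm setT (g \- P i g) +
    dnorm (Y i) (restr (Y i) (f \- g)).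
Proof.
move=> df dg; have dPf := P_dual i df; have dPg := P_dual i dg.
have dfg := dual_sub lin_subspaceT df dg.
apply: le_trans (lerD (lexx _) (dnorm_proj_restr i dfg)); rewrite proj_sub //.
apply: dnorm_le => // x _ x1 /=.
have -> : f x - g x = (f x - P i f x) - (g x - P i g x) + (P i f x - P i g x) by ring.
apply: le_trans (ler_normD _ _) _; apply: lerD; last first.
  exact: ler_dnormT (dual_sub lin_subspaceT dPf dPg) x1.
apply: le_trans (ler_normB _ _) _.
by apply: lerD; apply: ler_dnormT (dual_sub lin_subspaceT _ _) x1.
Qed.

Variables (eps delta : R).
Hypothesis eps_gt0 : 0 < eps.
Hypothesis delta_gt0 : 0 < delta.
Hypothesis P_star : forall i f, dual setT f -> dnorm setT f = 1 ->
  dnorm setT (f \+ P i f) > 2 - delta -> dnorm setT (f \- P i f) < eps / 4.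

(* A slice [c * (1 - eta) < psi x0] of the ball of radius [c] is deep enough
   for the ( * )-condition to apply, since [2 * (1 - eta) >= 2 - delta]. *)
Definition eta := Num.min (delta / 2) (1 / 2).

Lemma eta_gt0 : 0 < eta.
Proof. by rewrite lt_min !divr_gt0. Qed.

Lemma eta_le1 : eta * 2 <= 1.
Proof. by rewrite -ler_pdivlMr // ge_min lexx orbT. Qed.

Lemma eta_le_delta : eta * 2 <= delta.
Proof. by rewrite -ler_pdivlMr // ge_min lexx. Qed.

Definition restr_scaled i c (psi : X -> R) : X -> R := fun x => c^-1 * restr (Y i) psi x.

Lemma dual_restr_scaled i c psi : dual setT psi -> dual (Y i) (restr_scaled i c psi).
Proof. by move=> dpsi; apply/dual_scale/dual_restr. Qed.

Lemma dnorm_restr_scaled i c psi : 0 < c -> dual setT psi ->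
  dnorm (Y i) (restr_scaled i c psi) = c^-1 * dnorm (Y i) (restr (Y i) psi).
Proof.
move=> c0 dpsi; rewrite /restr_scaled dnorm_scale //; last exact: dual_restr.
by rewrite gtr0_norm // invr_gt0.
Qed.

Lemma dball_restr_scaled i c psi : 0 < c -> dual setT psi -> dnorm setT psi <= c ->
  dball (Y i) (restr_scaled i c psi).
Proof.
move=> c0 dpsi psic; split; first exact: dual_restr_scaled.
rewrite dnorm_restr_scaled // ler_pdivrMl // mulr1.
by apply: le_trans psic; apply/dnorm_restr/dpsi; case: (Ysub i).
Qed.

Lemma restr_scaled_sub i c f g :
  restr_scaled i c f \- restr_scaled i c g = restr_scaled i c (f \- g).
Proof. by rewrite /restr_scaled restr_sub; apply: funext => x /=; rewrite mulrBr. Qed.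

Definition in_slice (x0 : X) c psi :=
  [/\ dual setT psi, dnorm setT psi <= c & c * (1 - eta) < psi x0].

Lemma dnorm_sub_proj_slice i x0 c psi : Y i x0 -> `|x0| <= 1 -> 0 < c -> c <= 1 ->
  in_slice x0 c psi -> dnorm setT (psi \- P i psi) <= eps / 4.
Proof.
move=> Yx0 x01 c0 c1 [dpsi psic psix0].
have e0 := eta_gt0; have e1 := eta_le1; have ed := eta_le_delta.
set n := dnorm setT psi in psic *.
have psix0_n : psi x0 <= n.
  exact: le_trans (ler_norm _) (ler_dnormT dpsi x01).
have n0 : 0 < n.
  have : 0 < c * (1 - eta) by rewrite mulr_gt0 // subr_gt0; lra.
  lra.
pose phi x := n^-1 * psi x.
have dphi : dual setT phi by apply: dual_scale.
have phi1 : dnorm setT phi = 1.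
  by rewrite dnorm_scale // gtr0_norm ?invr_gt0 // mulVf ?gt_eqF.
have Pphi : P i phi = fun x => n^-1 * P i psi x by apply: proj_scale.
have dPpsi := P_dual i dpsi.
have : 2 - delta < dnorm setT (phi \+ P i phi).
  have dsum := dual_add lin_subspaceT dphi (P_dual i dphi).
  apply: lt_le_trans (le_trans (ler_norm _) (ler_dnormT dsum x01)).
  rewrite /= Pphi (proj_id_on dpsi Yx0) /phi.
  have : 1 - eta < n^-1 * psi x0.
    rewrite ltr_pdivlMl //; apply: le_lt_trans psix0; apply: ler_wpM2r => //; lra.
  lra.
move=> /(P_star dphi phi1).
have -> : phi \- P i phi = fun x => n^-1 * (psi x - P i psi x).
  by rewrite Pphi; apply: funext => x; rewrite mulrBr.
rewrite (dnorm_scale _ lin_subspaceT (dual_sub lin_subspaceT dpsi dPpsi)).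
rewrite gtr0_norm ?invr_gt0 // ltr_pdivrMl // => lt_eps.
apply/ltW/(lt_le_trans lt_eps); rewrite -[leRHS]mul1r.
by apply: ler_wpM2r; [rewrite divr_ge0 // ltW|lra].
Qed.

Lemma restr_scaled_sep i x0 c p1 p2 : Y i x0 -> `|x0| <= 1 -> 0 < c -> c <= 1 ->
  in_slice x0 c p1 -> in_slice x0 c p2 -> eps < dnorm setT (p1 \- p2) ->
  eps / 2 < dnorm (Y i) (restr_scaled i c p1 \- restr_scaled i c p2).
Proof.
move=> Yx0 x01 c0 c1 p1S p2S p12.
have n1 := dnorm_sub_proj_slice Yx0 x01 c0 c1 p1S.
have n2 := dnorm_sub_proj_slice Yx0 x01 c0 c1 p2S.
case: p1S p2S => [dp1 _ _] [dp2 _ _].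
have := dnorm_sub_proj_le i dp1 dp2.
have dp12 := dual_sub lin_subspaceT dp1 dp2.
rewrite restr_scaled_sub dnorm_restr_scaled //.
set r := dnorm (Y i) (restr (Y i) (p1 \- p2)) => split_le.
have r0 : 0 <= r by apply/dnorm_ge0/dual_restr => //; case: (Ysub i).
have : r <= c^-1 * r by rewrite -[leLHS]mul1r ler_wpM2r // invf_ge1.
have e2 : eps / 2 = eps / 4 * 2 by field.
have e4 : eps = eps / 4 * 4 by field.
rewrite e2; lra.
Qed.

Lemma wstar_nbhd_restr_slice i x0 c phi W : 0 < c -> c * (1 - eta) < phi x0 ->
  wstar_nbhd (Y i) (restr_scaled i c phi) W ->
  exists V, wstar_nbhd setT phi V /\
    forall p, V p -> c * (1 - eta) < p x0 /\ W (restr_scaled i c p).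
Proof.
move=> c0 phix0 [xs [d [d0 [xsY VW]]]].
pose d' := Num.min (c * d) (phi x0 - c * (1 - eta)).
have d'0 : 0 < d' by rewrite lt_min mulr_gt0 // subr_gt0 phix0.
have d'1 : d' <= c * d by rewrite ge_min lexx.
have d'2 : d' <= phi x0 - c * (1 - eta) by rewrite ge_min lexx orbT.
exists (fun f => dual setT f /\ forall x, x \in x0 :: xs -> `|f x - phi x| < d').
split; first by exists (x0 :: xs), d'; split => //; split => // f.
move=> p [dp p_near]; split.
  by have := p_near x0 (mem_head _ _); rewrite ltr_norml => /andP[? ?]; lra.
apply: VW; split; first exact: dual_restr_scaled.
move=> x xs_x; have Yx := xsY x xs_x.
rewrite /restr_scaled /= !restrE // -mulrBr normrM.
rewrite gtr0_norm ?invr_gt0 // ltr_pdivrMl //.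
by apply: lt_le_trans d'1; apply: p_near; rewrite in_cons xs_x orbT.
Qed.

Lemma szlenk_deriv_restr_slice i x0 c (KX KY : set (X -> R)) phi :
  Y i x0 -> `|x0| <= 1 -> 0 < c -> c <= 1 ->
  dbounded setT c KX -> dbounded (Y i) 1 KY ->
  (forall psi, KX psi -> c * (1 - eta) < psi x0 -> KY (restr_scaled i c psi)) ->
  szlenk_deriv setT eps KX phi -> c * (1 - eta) < phi x0 ->
  szlenk_deriv (Y i) (eps / 2) KY (restr_scaled i c phi).
Proof.
move=> Yx0 x01 c0 c1 KXc KY1 KXY [KXphi phi_deriv] phix0.
split; first exact: KXY.
move=> W /(wstar_nbhd_restr_slice c0 phix0) [V [HV VW]].
have VKc : dbounded setT c (V `&` KX) by move=> f [_ /KXc].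
have WKY1 : dbounded (Y i) 1 (W `&` KY) by move=> f [_ /KY1].
move: (phi_deriv V HV); rewrite (ddiam_gt _ VKc (ltW eps_gt0)) //.
move=> [p1 [p2 [[Vp1 Kp1] [[Vp2 Kp2] p12]]]].
have [p1x0 Wp1] := VW _ Vp1; have [p2x0 Wp2] := VW _ Vp2.
rewrite (ddiam_gt _ WKY1); [|by case: (Ysub i)|by rewrite divr_ge0 // ltW].
exists (restr_scaled i c p1), (restr_scaled i c p2).
split; first by split => //; apply: KXY.
split; first by split => //; apply: KXY.
have [dp1 p1c] := KXc _ Kp1; have [dp2 p2c] := KXc _ Kp2.
by apply: (restr_scaled_sep Yx0 x01 c0 c1) => //; split.
Qed.

Hypothesis Y_dense : closure (\bigcup_(i in setT) Y i) = setT.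

(* Approximate a norming point of [phi] by a point of some [Y i], within
   [eta / 8], and shrink it back into the unit ball. *)
Lemma exists_slice_point c phi : 0 < c -> dual setT phi -> dnorm setT phi <= c ->
  c * (1 - eta / 2) < dnorm setT phi ->
  exists i x0, [/\ Y i x0, `|x0| <= 1 & c * (1 - eta) < phi x0].
Proof.
move=> c0 dphi phic /(dnorm_gt_pos lin_subspaceT dphi) [x [_ x1 phix]].
have e0 := eta_gt0; have e1 := eta_le1.
pose rho := eta / 8; have rho0 : 0 < rho by rewrite divr_gt0.
have : closure (\bigcup_(i in setT) Y i) x by rewrite Y_dense.
move=> /(_ _ (nbhsx_ballx x rho rho0)) [y [[i _ Yy]]].
rewrite -ball_normE /ball_ /= => xy.
have y1 : `|y| <= 1 + rho.
  by have := ler_normB x (x - y); rewrite opprB addrC subrK; lra.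
have phixy : phi x - phi y <= c * rho.
  rewrite -(linear_onB lin_subspaceT (dual_linear dphi)) //.
  apply: le_trans (ler_norm _) (le_trans (ler_dnormM lin_subspaceT dphi _) _) => //.
  by apply: ler_pM => //; [exact: dnorm_ge0|exact: ltW].
have rho1 : 0 < 1 + rho by lra.
exists i, ((1 + rho)^-1 *: y); split; first exact: lin_subspaceZ.
  by rewrite normrZ gtr0_norm ?invr_gt0 // ler_pdivrMl // mulr1.
rewrite (linear_onZ _ lin_subspaceT (dual_linear dphi)) // ltr_pdivlMl //.
have -> : (1 + rho) * (c * (1 - eta)) =
    c * (1 - eta / 2) - c * rho - c * (eta / 4 + eta * eta / 8).
  by rewrite /rho; field.
have : 0 <= c * (eta / 4 + eta * eta / 8).
  by rewrite mulr_ge0 ?ltW // addr_gt0 ?divr_gt0 ?mulr_gt0.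
lra.
Qed.

Variables (A : Type) (ltA : A -> A -> Prop).
Hypothesis ltA_wo : is_wellorder ltA.
Hypothesis Y_szlenk : forall i, Sz_le (Y i) (omega_pow_lt ltA).
Variable D : omega_pow (option A) -> set (X -> R).
Hypothesis D_iter :
  szlenk_iteration setT eps (dball setT) (omega_pow_lt (succ_lt ltA)) D.

Local Notation olt := (omega_pow_lt ltA).
Local Notation olt' := (omega_pow_lt (succ_lt ltA)).
Local Notation zero := (omega_pow0 A).

Let olt'_wo : is_wellorder olt' := omega_pow_wellorder (succ_lt_wellorder ltA_wo).

Lemma szlenk_iter_decr t u : olt' u t -> D t `<=` D u.
Proof. exact: (szlenk_iteration_decr olt'_wo D_iter). Qed.

Lemma szlenk_iter_bottom : D (omega_mul_add 0 zero) = dball setT.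
Proof.
have [bottom _] := D_iter (omega_mul_add 0 zero).
by apply: bottom => u /nlt_omega_mul_add00.
Qed.

Lemma szlenk_iter_ball t : D t `<=` dball setT.
Proof.
rewrite -szlenk_iter_bottom.
have [->//|[/nlt_omega_mul_add00//|/szlenk_iter_decr//]] :=
  omega_pow_lt_total (succ_lt_wellorder ltA_wo) t (omega_mul_add 0 zero).
Qed.

Definition ratio := 1 - eta / 2.

Lemma ratio_gt0 : 0 < ratio.
Proof. by have := eta_le1; rewrite /ratio; lra. Qed.

Lemma ratio_lt1 : ratio < 1.
Proof. by have := eta_gt0; rewrite /ratio; lra. Qed.

Definition block_bound n :=
  forall phi, D (omega_mul_add n zero) phi -> dnorm setT phi <= ratio ^+ n.

Lemma dbounded_block n t : block_bound n ->
  dbounded setT (ratio ^+ n) (D (omega_mul_add n t)).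
Proof.
move=> bn phi Dphi; split; first by case: (szlenk_iter_ball Dphi).
apply: bn; have [zt|[zt|tz]] := omega_pow_lt_total ltA_wo zero t.
- by rewrite zt.
- by apply: (szlenk_iter_decr _ Dphi); apply/omega_mul_add_lt2l.
- by case: (nlt_omega_pow0 tz).
Qed.

Section Block.
Variables (n : nat) (i : I) (x0 : X).
Hypothesis bn : block_bound n.
Hypothesis Yx0 : Y i x0.
Hypothesis x01 : `|x0| <= 1.

Local Notation c := (ratio ^+ n).
Local Notation DY := (szlenk_gfp (Y i) (eps / 2) (dball (Y i)) olt).

Let c_gt0 : 0 < c. Proof. exact/exprn_gt0/ratio_gt0. Qed.

Let c_le1 : c <= 1.
Proof. by apply: exprn_ile1; [exact/ltW/ratio_gt0|exact/ltW/ratio_lt1]. Qed.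

Definition slice_family t : set (X -> R) := fun chi =>
  exists2 psi, D (omega_mul_add n t) psi /\ c * (1 - eta) < psi x0 &
    chi = restr_scaled i c psi.

Lemma slice_family_ball t : dbounded (Y i) 1 (slice_family t).
Proof.
move=> _ [psi [Dpsi _] ->]; have [dpsi psic] := dbounded_block bn Dpsi.
by case: (dball_restr_scaled i c_gt0 dpsi psic).
Qed.

Lemma szlenk_deriv_restr_block u K phi : dbounded (Y i) 1 K ->
  (forall psi, D (omega_mul_add n u) psi -> c * (1 - eta) < psi x0 ->
     K (restr_scaled i c psi)) ->
  szlenk_deriv setT eps (D (omega_mul_add n u)) phi -> c * (1 - eta) < phi x0 ->
  szlenk_deriv (Y i) (eps / 2) K (restr_scaled i c phi).
Proof. exact: (szlenk_deriv_restr_slice Yx0 x01 c_gt0 c_le1 (dbounded_block bn)). Qed.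

Lemma slice_family_unfold s :
  slice_family s `<=` szlenk_unfold (Y i) (eps / 2) (dball (Y i)) olt slice_family s.
Proof.
move=> _ [psi [Dpsi psix0] ->].
have [dpsi psic] := dbounded_block bn Dpsi.
split; first exact: dball_restr_scaled.
have [_ [D_pred D_lim]] := D_iter (omega_mul_add n s).
split=> [u pu|ex nopred u us].
  rewrite (D_pred _ (is_pred_omega_mul_add n pu)) in Dpsi.
  apply: (szlenk_deriv_restr_block (@slice_family_ball u) _ Dpsi psix0).
  by move=> psi' Dpsi' psi'x0; exists psi'.
have [ex' nopred'] := limit_omega_mul_add n ex nopred.
rewrite (D_lim ex' nopred') in Dpsi.
by exists psi => //; split => //; apply: Dpsi; apply/omega_mul_add_lt2l.
Qed.

Lemma slice_family_gfp t : slice_family t `<=` DY t.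
Proof. exact: szlenk_gfp_coind slice_family_unfold t. Qed.

Lemma restr_block_last phi : D (omega_mul_add n.+1 zero) phi ->
  c * (1 - eta) < phi x0 -> szlenk_last (Y i) (eps / 2) olt DY (restr_scaled i c phi).
Proof.
move=> Dphi phix0; split=> [m m_max|_ t].
  have [_ [D_pred _]] := D_iter (omega_mul_add n.+1 zero).
  rewrite (D_pred _ (is_pred_omega_mul_add_max ltA_wo n m_max)) in Dphi.
  apply: (szlenk_deriv_restr_block _ _ Dphi phix0).
    by move=> f DYf; apply: dbounded_dball; exact: szlenk_gfp_sub DYf.
  by move=> psi Dpsi psix0; apply: slice_family_gfp; exists psi.
apply: slice_family_gfp; exists phi => //; split => //.
exact: (szlenk_iter_decr (omega_mul_add_lt_next _ _ _) Dphi).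
Qed.

End Block.

Lemma block_bound_succ n : block_bound n -> block_bound n.+1.
Proof.
move=> bn phi Dphi; set c := ratio ^+ n.
have c_gt0 : 0 < c by exact/exprn_gt0/ratio_gt0.
have [dphi _] := szlenk_iter_ball Dphi.
have phic : dnorm setT phi <= c.
  exact/bn/(szlenk_iter_decr (omega_mul_add_lt_next _ _ _) Dphi).
rewrite exprSr leNgt; apply/negP.
move=> /(exists_slice_point c_gt0 dphi phic) [i [x0 [Yx0 x01 phix0]]].
have oltA_wo := omega_pow_wellorder ltA_wo.
have e2 : 0 < eps / 2 by rewrite divr_gt0.
have DY_iter := szlenk_gfp_dball_iteration (proj1 (Ysub i)) (ltW e2) oltA_wo.
have DY_last := szlenk_top_last (Y i) (eps / 2) (dball (Y i)) oltA_wo zero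
  (szlenk_gfp (Y i) (eps / 2) (dball (Y i)) olt).
case: (Y_szlenk e2 DY_iter DY_last) => [[t DYt]|last0].
  have := @slice_family_gfp n i x0 bn Yx0 x01 t (restr_scaled i c phi).
  rewrite DYt; apply; exists phi => //; split => //.
  exact: (szlenk_iter_decr (omega_mul_add_lt_next _ _ _) Dphi).
by move: (restr_block_last bn Yx0 x01 Dphi phix0); rewrite last0.
Qed.

Lemma block_bound_all n : block_bound n.
Proof.
elim: n => [|n /block_bound_succ//] phi.
by rewrite szlenk_iter_bottom expr0 => -[].
Qed.

Lemma szlenk_iter_empty : exists t, D t = set0.
Proof.
have e2 : 0 < eps / 2 by rewrite divr_gt0.
have [N ratioN] := exists_expr_lt (ltW ratio_gt0) ratio_lt1 e2.
have [t Nt tmin] :=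
  wo_min_exists olt'_wo (ex_intro _ _ (omega_mul_add_lt_next ltA N zero)).
have Npred : is_pred olt' (omega_mul_add N zero) t.
  by split=> // v [Nv vt]; exact: tmin vt Nv.
exists t; apply/seteqP; split=> // phi.
have [_ [D_pred _]] := D_iter t; rewrite (D_pred _ Npred) => -[_ phi_deriv].
have Hdual : wstar_nbhd setT phi (dual setT).
  by exists [::], 1; split=> //; split=> // f [].
have DNb : dbounded setT (ratio ^+ N) (dual setT `&` D (omega_mul_add N zero)).
  by move=> f [_ /(dbounded_block (@block_bound_all N))].
move: (phi_deriv _ Hdual); rewrite (ddiam_gt _ DNb (ltW eps_gt0)) //.
move=> [p1 [p2 [/DNb [dp1 p1N] [/DNb [dp2 p2N] p12]]]].
have := dnorm_sub_le Logic.I dp1 dp2.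
have : eps = eps / 2 * 2 by field.
lra.
Qed.

End StarProjection.

Theorem lemma3p11 (R : realType) (X : completeNormedModType R)
  (I : Type) (Y : I -> set X)
  (A : Type) (ltA : A -> A -> Prop) :
  is_wellorder ltA ->
  (forall i, lin_subspace (Y i) /\ closed (Y i)) ->
  star_condition Y ->
  (forall i, Sz_le (Y i) (omega_pow_lt ltA)) ->
  closure (\bigcup_(i in setT) Y i) = setT ->
  Sz_le (setT : set X) (omega_pow_lt (succ_lt ltA)).
Proof.
move=> ltA_wo Ysub [P [P_dual [P_lin [P_idem [P_ker [P_norm P_star]]]]]].
move=> Y_szlenk Y_dense eps eps_gt0 D F D_iter _; left.
have [delta [delta_gt0 P_delta]] := P_star _ (divr_gt0 eps_gt0 (ltr0Sn _ 3)).
exact: (szlenk_iter_empty (fun i => proj1 (Ysub i)) P_dual P_lin P_idem P_ker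
  P_norm eps_gt0 delta_gt0 P_delta Y_dense ltA_wo Y_szlenk D_iter).
Qed.
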